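(* Let $(B,\mathfrak{m})$ be a deformation base, $X$ a vector space and $M_1,\dots,M_k\subseteq B\widehat{\otimes}X$ $B$-submodules. The following are equivalent: (i) $B\widehat{\otimes}X=M_1\oplus\dots\oplus M_k$; (ii) each $M_i$ is pseudoclosed and quasi-flat, and $X=\pi(M_1)\oplus\dots\oplus\pi(M_k)$.
   Context: Deformation base: complete local Noetherian unital $\mathbb{C}$-algebra $B$ with maximal ideal $\mathfrak{m}$, $B/\mathfrak{m}=\mathbb{C}$. $B\widehat{\otimes}X=\varprojlim(B/\mathfrak{m}^k\otimes X)$, $\pi:B\widehat{\otimes}X\to X$ is the canonical projection (reduction mod $\mathfrak{m}$), $\mathfrak{m}X$ is the image of $\mathfrak{m}\widehat{\otimes}X$. For a subspace $Y\subseteq B\widehat{\otimes}X$: $BY=\{\sum_ib_iy_i:y_i\in Y,b_i\in\mathfrak{m}^{k_i},k_i\to\infty\}$, and $\mathfrak{m}Y$ the same with all $k_i\ge1$. A $B$-submodule $M$ is pseudoclosed if $BM\subseteq M$, and quasi-flat if $M\cap\mathfrak{m}X\subseteq\mathfrak{m}M$. *)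

From HB Require Import structures.
From mathcomp Require Import all_boot all_order all_algebra.
From mathcomp Require Import reals.
From mathcomp.real_closed Require Import complex.
From Stdlib Require List.
Set Implicit Arguments. Unset Strict Implicit. Unset Printing Implicit Defensive.
Import Order.TTheory GRing.Theory Num.Theory.
Local Open Scope ring_scope.

Section Defs.
Variable R : realType.
Local Notation C := (R[i]).

Section Ideals.
Variable B : comNzRingType.

Definition is_ideal (J : B -> Prop) : Prop :=
  J 0 /\ (forall x y, J x -> J y -> J (x + y)) /\ (forall a x, J x -> J (a * x)).

Definition is_maximal_ideal (J : B -> Prop) : Prop :=
  is_ideal J /\ ~ J 1 /\
  (forall K, is_ideal K -> ~ K 1 -> (forall x, J x -> K x) -> forall x, K x -> J x).

Definition noetherian : Prop :=
  forall J : B -> Prop, is_ideal J ->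
    exists (n : nat) (g : 'I_n -> B),
      forall x, J x <-> exists a : 'I_n -> B, x = \sum_(j < n) a j * g j.

Fixpoint mpow (m : B -> Prop) (k : nat) : B -> Prop :=
  match k with
  | 0 => fun _ => True
  | k'.+1 => fun x => exists (n : nat) (a b : 'I_n -> B),
      (forall j, m (a j)) /\ (forall j, mpow m k' (b j)) /\
      x = \sum_(j < n) a j * b j
  end.

(* B is m-adically complete and separated, i.e. B -> lim B/m^k is bijective *)
Definition madic_complete (m : B -> Prop) : Prop :=
  (forall x, (forall k, mpow m k x) -> x = 0) /\
  (forall u : nat -> B, (forall n, mpow m n (u n.+1 - u n)) ->
     exists x, forall n, mpow m n (x - u n)).
End Ideals.

(* (B, m) is a deformation base; rho : B -> C is the reduction map
   B -> B/m = C (a C-algebra morphism with kernel m). *)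
Definition deformation_base (B : comAlgType C) (m : B -> Prop) (rho : B -> C) : Prop :=
  is_maximal_ideal m /\
  (forall J, is_maximal_ideal J -> forall x, J x <-> m x) /\
  noetherian B /\
  madic_complete m /\
  (forall x y, rho (x + y) = rho x + rho y) /\
  (forall x y, rho (x * y) = rho x * rho y) /\
  (forall c : C, rho (c *: 1) = c) /\
  (forall x, m x <-> rho x = 0).

(* The vector space X, modelled as the free C-vector space on a basis I
   (finitely supported functions I -> C), and B (^) X = lim (B/m^k (x) X),
   modelled as the functions f : I -> B with f i in m^k for all but
   finitely many i, for every k.                                       *)
Section Hat.
Variables (B : comAlgType C) (I : Type).

Definition Xsp (x : I -> C) : Prop :=
  exists s : seq I, forall i, x i <> 0 -> List.In i s.

Definition BhatX (m : B -> Prop) (f : I -> B) : Prop :=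
  forall k, exists s : seq I, forall i, ~ mpow m k (f i) -> List.In i s.

Definition pi_red (rho : B -> C) (f : I -> B) : I -> C := fun i => rho (f i).

Definition mX (m : B -> Prop) (f : I -> B) : Prop := BhatX m f /\ forall i, m (f i).

Definition series_conv (m : B -> Prop) (b : nat -> B) (y : nat -> I -> B)
  (g : I -> B) : Prop :=
  forall k, exists N, forall N', (N <= N')%N ->
    forall i, mpow m k (g i - \sum_(n < N') b n * y n i).

Definition span_hat (m : B -> Prop) (lo : nat) (Y : (I -> B) -> Prop)
  (g : I -> B) : Prop :=
  exists (b : nat -> B) (y : nat -> I -> B) (kk : nat -> nat),
    (forall n, Y (y n)) /\
    (forall n, (lo <= kk n)%N /\ mpow m (kk n) (b n)) /\
    (forall K, exists N, forall n, (N <= n)%N -> (K <= kk n)%N) /\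
    series_conv m b y g.

Definition BY m Y := span_hat m 0 Y.
Definition mY m Y := span_hat m 1 Y.

Definition is_Bsubmodule (m : B -> Prop) (M : (I -> B) -> Prop) : Prop :=
  (forall f, M f -> BhatX m f) /\ M (fun _ => 0) /\
  (forall f g, M f -> M g -> M (fun i => f i + g i)) /\
  (forall (a : B) f, M f -> M (fun i => a * f i)).

Definition pseudoclosed m M : Prop := forall g, BY m M g -> M g.

Definition quasi_flat m M : Prop := forall g, M g -> mX m g -> mY m M g.

Definition image_pi (rho : B -> C) (M : (I -> B) -> Prop) (x : I -> C) : Prop :=
  exists f, M f /\ x = pi_red rho f.
End Hat.

Definition is_direct_sum (G : zmodType) (I : Type) (n : nat)
  (V : (I -> G) -> Prop) (W : 'I_n -> (I -> G) -> Prop) : Prop :=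
  (forall j f, W j f -> V f) /\
  (forall f, V f -> exists w : 'I_n -> I -> G,
       (forall j, W j (w j)) /\ f = (fun i => \sum_(j < n) w j i)) /\
  (forall w w' : 'I_n -> I -> G, (forall j, W j (w j) /\ W j (w' j)) ->
       (fun i => \sum_(j < n) w j i) = (fun i => \sum_(j < n) w' j i) ->
       forall j, w j = w' j).
End Defs.

From HB Require Import structures.
From mathcomp Require Import all_boot all_order all_algebra.
From mathcomp Require Import reals.
From mathcomp.real_closed Require Import complex.
From mathcomp Require Import boolp ring.
Set Implicit Arguments. Unset Strict Implicit. Unset Printing Implicit Defensive.
Import Order.TTheory GRing.Theory Num.Theory.
Local Open Scope ring_scope.

(* If [B^X = M_1 ⊕ ... ⊕ M_n], the decomposition respects the m-adic
   filtration: by induction on [k], writing an element of [m^(k+1) X] as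
   [sum_r g_r h_r] over generators [g_r] of [m] and decomposing the [h_r]
   shows that its components lie in [m^(k+1) X].  Hence each summand is
   m-adically closed (so pseudoclosed), quasi-flat, and reduction mod [m]
   splits [X].

   Conversely, quasi-flatness of [N] improves by induction on [k] to
   [N ∩ m^k X ⊆ m^k N + m^(k+1) X]; the induction step uses that [X] is flat
   over [C], via the equational criterion for vanishing tensors.  With the
   directness of the [pi(M_j)] this pushes the components of a relation
   [sum_j d_j = 0] into every [m^k X], so they vanish.  Existence: split off
   the [M_j]-parts mod [m] and recurse on the remainder [sum_r g_r h'_r]
   along the [s]-ary tree of generators; the resulting series converge by
   completeness and their limits lie in [M_j] by pseudoclosedness. *)

Lemma exchange_sum_mul (Rg : pzSemiRingType) (S T : finType) (a : S -> Rg)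
    (b : T -> S -> Rg) (v : T -> Rg) :
  \sum_s a s * (\sum_t b t s * v t) = \sum_t (\sum_s a s * b t s) * v t.
Proof.
under eq_bigr => s _ do rewrite mulr_sumr.
rewrite exchange_big /=; apply: eq_bigr => t _; rewrite mulr_suml.
by apply: eq_bigr => s _; rewrite mulrA.
Qed.

Lemma sum_sigT (V : nmodType) (T : finType) (q : T -> nat) (F : forall t, 'I_(q t) -> V) :
  \sum_t \sum_(a < q t) F t a = \sum_(p : {t : T & 'I_(q t)}) F (tag p) (tagged p).
Proof. exact: (sig_big_dep xpredT (fun _ => xpredT)). Qed.

Section TensorVanishing.
Variables (K : fieldType) (V : lmodType K) (I : Type) (J L : V -> Prop).
Hypothesis J0 : J 0.
Hypothesis JD : forall u v, J u -> J v -> J (u + v).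
Hypothesis JZ : forall (a : K) v, J v -> J (a *: v).

Lemma subspaceB u v : J u -> J v -> J (u - v).
Proof. by move=> Ju Jv; apply: JD => //; rewrite -scaleN1r; apply: JZ. Qed.

Lemma subspace_sum (T : Type) (r : seq T) (P : pred T) (F : T -> V) :
  (forall t, J (F t)) -> J (\sum_(t <- r | P t) F t).
Proof. by move=> JF; apply: big_ind => // t _; apply: JF. Qed.

Definition tensor_relations (S : finType) (gam : S -> V) (x : S -> I -> K) :=
  exists q (kap : 'I_q -> S -> K) (w : 'I_q -> V),
    (forall t, L (w t)) /\ (forall t i, \sum_(s : S) kap t s * x s i = 0) /\
    (forall s, J (gam s - \sum_(t < q) kap t s *: w t)).

Variables (S : finType) (gam : S -> V).
Hypothesis L_gam : forall s, L (gam s).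

Lemma tensor_relations0 : tensor_relations gam (fun _ _ => 0).
Proof.
exists #|S|, (fun t s => (enum_rank s == t)%:R), (fun t => gam (enum_val t)).
split=> [t|]; first exact: L_gam.
split=> [t i|s]; first by rewrite big1 // => s _; rewrite mulr0.
rewrite (bigD1 (enum_rank s)) //= eqxx scale1r enum_rankK big1 ?addr0 ?subrr //.
by move=> t; rewrite eq_sym => /negbTE ->; rewrite scale0r.
Qed.

(* Gaussian elimination of the coordinate [i0] using the row [x s0]. *)
Definition pivot (x : S -> I -> K) s0 i0 : S -> I -> K :=
  fun s i => x s i - x s i0 / x s0 i0 * x s0 i.

Lemma tensor_relations_pivot x s0 i0 : x s0 i0 != 0 ->
  (forall i, J (\sum_(s : S) x s i *: gam s)) ->
  tensor_relations gam (pivot x s0 i0) -> tensor_relations gam x.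
Proof.
move=> x0 Jx [q [kap [w [Lw [kapx Jw]]]]].
pose c t := \sum_(s : S) kap t s * x s i0.
exists q, (fun t s => kap t s - (s == s0)%:R * (c t / x s0 i0)), w.
split=> //; split=> [t i|s].
  apply: etrans (kapx t i); rewrite /pivot.
  under eq_bigr => s _ do rewrite mulrBl.
  under [RHS]eq_bigr => s _ do rewrite mulrBr.
  rewrite !sumrB; congr (_ - _).
  rewrite (bigD1 s0) //= eqxx mul1r big1 ?addr0 => [|s /negbTE ->]; last by rewrite mulr0n !mul0r.
  by rewrite /c !mulr_suml; apply: eq_bigr => s _; rewrite !mulrA.
under eq_bigr => t _ do rewrite scalerBl.
rewrite sumrB opprB [_ - _]addrC addrA; apply: JD; first exact: Jw.
have [_|_] := eqVneq s s0; last by rewrite big1 // => t _; rewrite mulr0n mul0r scale0r.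
under eq_bigr => t _ do rewrite mul1r.
have -> : \sum_(t < q) (c t / x s0 i0) *: w t =
    (x s0 i0)^-1 *: (\sum_(s' : S) x s' i0 *: gam s' -
      \sum_(s' : S) x s' i0 *: (gam s' - \sum_(t < q) kap t s' *: w t)).
  rewrite -sumrB; under [in RHS]eq_bigr => s' _ do rewrite -scalerBr opprB addrC subrK.
  under [in RHS]eq_bigr => s' _ do rewrite scaler_sumr.
  rewrite exchange_big scaler_sumr /=; apply: eq_bigr => t _.
  rewrite /c mulrC mulr_sumr scaler_suml scaler_sumr; apply: eq_bigr => s' _.
  by rewrite !scalerA; congr (_ *: _); ring.
by apply/JZ/subspaceB => //; apply: subspace_sum => s'; apply: JZ.
Qed.

Lemma tensor_vanishing (sup : seq I) (x : S -> I -> K) :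
  (forall s i, x s i <> 0 -> List.In i sup) ->
  (forall i, J (\sum_(s : S) x s i *: gam s)) -> tensor_relations gam x.
Proof.
elim: sup x => [|i0 sup IH] x supp Jx.
  have -> : x = (fun _ _ => 0).
    by apply/funext => s; apply/funext => i; have [//|/supp []] := pselect (x s i = 0).
  exact: tensor_relations0.
have [[s0 /eqP x0]|nox] := pselect (exists s0, x s0 i0 <> 0); last first.
  apply: IH => // s i xi; case/supp: (xi) => // Ei.
  by case: nox; exists s; rewrite Ei.
apply: (tensor_relations_pivot x0 Jx); apply: IH => [s i|i].
- rewrite /pivot => xi.
  have [Ei|ni] := pselect (i = i0); first by case: xi; rewrite Ei mulfVK // subrr.
  have [xsi|/supp] := pselect (x s i = 0); last by case=> // /esym.
  have [xs0i|/supp] := pselect (x s0 i = 0); last by case=> // /esym.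
  by case: xi; rewrite xsi xs0i mulr0 subrr.
- have -> : \sum_(s : S) pivot x s0 i0 s i *: gam s =
      \sum_(s : S) x s i *: gam s - (x s0 i / x s0 i0) *: \sum_(s : S) x s i0 *: gam s.
    rewrite scaler_sumr -sumrB; apply: eq_bigr => s _.
    by rewrite /pivot scalerBl scalerA; congr (_ - _ *: _); ring.
  by apply: subspaceB => //; apply: JZ.
Qed.

End TensorVanishing.

Section IdealPowers.
Variables (B : comNzRingType) (m : B -> Prop).
Hypothesis m_ideal : is_ideal m.

Lemma ideal0 : m 0. Proof. by case: m_ideal. Qed.

Lemma idealD x y : m x -> m y -> m (x + y).
Proof. by case: m_ideal => _ [mD _]; apply: mD. Qed.

Lemma idealM a x : m x -> m (a * x).
Proof. by case: m_ideal => _ [_ mM]; apply: mM. Qed.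

Lemma mpow0 k : mpow m k 0.
Proof.
case: k => [//|k]; exists 0%N, (fun _ => 0), (fun _ => 0).
by split; [case | split; [case | rewrite big_ord0]].
Qed.

Lemma mpowD k x y : mpow m k x -> mpow m k y -> mpow m k (x + y).
Proof.
case: k => [//|k] [n1 [a1 [b1 [Ha1 [Hb1 ->]]]]] [n2 [a2 [b2 [Ha2 [Hb2 ->]]]]].
pose glue T (f1 : 'I_n1 -> T) (f2 : 'I_n2 -> T) j :=
  match split j with inl j1 => f1 j1 | inr j2 => f2 j2 end.
exists (n1 + n2)%N, (glue _ a1 a2), (glue _ b1 b2).
split; first by move=> j; rewrite /glue; case: (split j).
split; first by move=> j; rewrite /glue; case: (split j).
rewrite big_split_ord /glue; congr (_ + _); apply: eq_bigr => j _.
- by rewrite (unsplitK (inl _ j)).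
- by rewrite (unsplitK (inr _ j)).
Qed.

Lemma mpowM k a x : mpow m k x -> mpow m k (a * x).
Proof.
case: k => [//|k] [n [a1 [b1 [Ha1 [Hb1 ->]]]]].
exists n, (fun j => a * a1 j), b1; split=> [j|]; first exact: idealM.
by split=> //; rewrite mulr_sumr; apply: eq_bigr => j _; rewrite mulrA.
Qed.

Lemma mpowB k x y : mpow m k x -> mpow m k y -> mpow m k (x - y).
Proof. by move=> Hx Hy; apply: mpowD => //; rewrite -mulN1r; apply: mpowM. Qed.

Lemma mpow_sum k (T : Type) (r : seq T) (P : pred T) (F : T -> B) :
  (forall t, mpow m k (F t)) -> mpow m k (\sum_(t <- r | P t) F t).
Proof. by move=> HF; apply: big_ind => //; [apply: mpow0 | apply: mpowD]. Qed.

Lemma mpow_le a b x : (a <= b)%N -> mpow m b x -> mpow m a x.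
Proof.
have mpowS k y : mpow m k.+1 y -> mpow m k y.
  elim: k y => [//|k IH] y [n [u [v [Hu [Hv ->]]]]].
  by exists n, u, v; split=> //; split=> // j; apply: IH.
move=> /subnK <-; elim: (b - a)%N x => [//|d IH] x Hx.
by apply/IH/mpowS; rewrite -addSn.
Qed.

Lemma mpowS_mul k x y : m x -> mpow m k y -> mpow m k.+1 (x * y).
Proof.
move=> Hx Hy; exists 1%N, (fun _ => x), (fun _ => y).
by split=> //; split=> //; rewrite big_ord1.
Qed.

Lemma mpowS_mulr k x y : mpow m k x -> m y -> mpow m k.+1 (x * y).
Proof. by move=> Hx Hy; rewrite mulrC; apply: mpowS_mul. Qed.

Lemma mpow1 x : mpow m 1 x <-> m x.
Proof.
split=> [[n [a [b [Ha [_ ->]]]]]|Hx]; last by rewrite -[x]mulr1; apply: mpowS_mul.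
apply: big_ind; [exact: ideal0 | exact: idealD | by move=> j _; rewrite mulrC; apply: idealM].
Qed.

Lemma noetherian_gens : noetherian B -> exists (s : nat) (g : 'I_s -> B),
  (0 < s)%N /\ (forall r, m (g r)) /\
  (forall x, m x <-> exists a : 'I_s -> B, x = \sum_(r < s) a r * g r).
Proof.
move=> /(_ m m_ideal) [n [gg Hgg]].
have mgg j : m (gg j).
  apply/Hgg; exists (fun j' => (j' == j)%:R).
  by rewrite (bigD1 j) //= eqxx mul1r big1 ?addr0 // => j' /negbTE ->; rewrite mul0r.
have mg r : m (oapp gg 0 (unlift ord0 r)).
  by case: (unlift ord0 r) => [j|] /=; [apply: mgg | apply: ideal0].
exists n.+1, (fun r => oapp gg 0 (unlift ord0 r)); split=> //; split=> // x; split.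
- move=> /Hgg [a ->]; exists (fun r => oapp a 0 (unlift ord0 r)).
  by rewrite big_ord_recl unlift_none mul0r add0r; apply: eq_bigr => j _; rewrite liftK.
- move=> [a ->]; apply: big_ind; [exact: ideal0 | exact: idealD | by move=> r _; apply: idealM].
Qed.

Variables (s : nat) (g : 'I_s -> B).
Hypothesis g_m : forall r, m (g r).
Hypothesis g_span : forall x, m x <-> exists a : 'I_s -> B, x = \sum_(r < s) a r * g r.

Lemma mpowS_gens k x : mpow m k.+1 x <->
  exists u : 'I_s -> B, (forall r, mpow m k (u r)) /\ x = \sum_(r < s) g r * u r.
Proof.
split=> [[n [a [b [Ha [Hb ->]]]]] | [u [Hu ->]]]; last by exists s, g, u.
have [al Hal] := choice (fun j => proj1 (g_span (a j)) (Ha j)).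
exists (fun r => \sum_(j < n) al j r * b j); split.
  by move=> r; apply: mpow_sum => j; apply/mpowM/Hb.
under eq_bigr => j _ do rewrite Hal mulr_suml.
rewrite exchange_big /=; apply: eq_bigr => r _; rewrite mulr_sumr.
by apply: eq_bigr => j _; rewrite mulrCA mulrA.
Qed.

Hypothesis m_separated : forall x, (forall k, mpow m k x) -> x = 0.

Lemma m_gens_graded x : m x -> exists u : 'I_s -> B,
  x = \sum_(r < s) g r * u r /\ forall k r, mpow m k.+1 x -> mpow m k (u r).
Proof.
move=> mx; have [xall|] := pselect (forall k, mpow m k x).
  exists (fun _ => 0); rewrite (m_separated xall) big1 => [|r _]; last exact: mulr0.
  by split=> // k r _; apply: mpow0.
move=> /existsNP exK.
have {}exK : exists k, ~~ `[< mpow m k x >] by case: exK => k /asboolPn; exists k.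
case: (ex_minnP exK) => -[|[|c]] /asboolPn nxk mink; first by case: nxk.
  by case: nxk; apply/mpow1.
have xc : mpow m c.+1 x by apply/asboolP; apply: contraT => /mink; rewrite ltnn.
have [u [Hu Ex]] := proj1 (mpowS_gens c x) xc.
exists u; split=> // k r xk; apply: (mpow_le _ (Hu r)).
by rewrite leqNgt; apply/negP => ck; exact: nxk (@mpow_le c.+2 k.+1 _ ck xk).
Qed.

End IdealPowers.

Section Deformation.
Variable R : realType.
Local Notation C := R[i].
Variables (B : comAlgType C) (m : B -> Prop) (I : Type).
Hypothesis m_ideal : is_ideal m.

Definition mpowX k (f : I -> B) := forall i, mpow m k (f i).

Lemma mpowZ k (a : C) x : mpow m k x -> mpow m k (a *: x).
Proof. by move=> xk; rewrite -[x]mul1r scalerAl; apply: (mpowM m_ideal). Qed.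

Section Submodule.
Variable M : (I -> B) -> Prop.
Hypothesis M_submod : is_Bsubmodule m M.

Lemma submod_BhatX f : M f -> BhatX m f. Proof. by case: M_submod => H _; apply: H. Qed.
Lemma submod0 : M (fun _ => 0). Proof. by case: M_submod => _ []. Qed.

Lemma submodD f h : M f -> M h -> M (fun i => f i + h i).
Proof. by case: M_submod => _ [_ [H _]]; apply: H. Qed.

Lemma submodM a f : M f -> M (fun i => a * f i).
Proof. by case: M_submod => _ [_ [_ H]]; apply: H. Qed.

Lemma submodZ (c : C) f : M f -> M (fun i => c *: f i).
Proof.
have -> : (fun i => c *: f i) = (fun i => c *: 1 * f i).
  by apply/funext => i; rewrite -scalerAl mul1r.
exact: submodM.
Qed.

Lemma submodB f h : M f -> M h -> M (fun i => f i - h i).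
Proof.
move=> Mf Mh; have -> : (fun i => f i - h i) = (fun i => f i + -1 * h i).
  by apply/funext => i; rewrite mulN1r.
by apply: submodD => //; apply: submodM.
Qed.

Lemma submod_sum (T : Type) (r : seq T) (P : pred T) (F : T -> I -> B) :
  (forall t, M (F t)) -> M (fun i => \sum_(t <- r | P t) F t i).
Proof.
move=> MF; elim: r => [|t r IH]; first by under eq_fun do rewrite big_nil; apply: submod0.
under eq_fun do rewrite big_cons; case: (P t) => //.
exact: submodD.
Qed.

Lemma submod_lin (T : Type) (r : seq T) (P : pred T) (a : T -> B) (F : T -> I -> B) :
  (forall t, M (F t)) -> M (fun i => \sum_(t <- r | P t) a t * F t i).
Proof. by move=> MF; apply: submod_sum => t; apply: submodM. Qed.

End Submodule.

Lemma BhatX_submod : is_Bsubmodule m (@BhatX _ _ I m).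
Proof.
split=> //; split; first by move=> k; exists [::] => i []; apply: mpow0.
split=> [f h Hf Hh k | a f Hf k].
  have [l1 H1] := Hf k; have [l2 H2] := Hh k; exists (l1 ++ l2) => i Hi.
  apply/List.in_or_app; have [fk|/H1] := pselect (mpow m k (f i)); last by left.
  have [hk|/H2] := pselect (mpow m k (h i)); last by right.
  by case: Hi; apply: mpowD.
by have [l Hl] := Hf k; exists l => i Hi; apply: Hl => fk; apply/Hi/(mpowM m_ideal).
Qed.

Lemma BhatX_approx f : (forall k, exists p, BhatX m p /\ mpowX k (fun i => f i - p i)) ->
  BhatX m f.
Proof.
move=> Hf k; have [p [/(_ k) [l Hl] fp]] := Hf k; exists l => i fi.
by apply: Hl => pk; apply: fi; rewrite -(subrK (p i) (f i)); apply: mpowD.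
Qed.

Variable rho : B -> C.
Hypothesis rhoD : forall x y, rho (x + y) = rho x + rho y.
Hypothesis rhoM : forall x y, rho (x * y) = rho x * rho y.
Hypothesis rhoC : forall c : C, rho (c *: 1) = c.
Hypothesis rho_m : forall x, m x <-> rho x = 0.

Lemma rho0 : rho 0 = 0.
Proof. by apply: (@addrI _ (rho 0)); rewrite -rhoD !addr0. Qed.

Lemma rhoB x y : rho (x - y) = rho x - rho y.
Proof.
by apply: (@addrI _ (rho y)); rewrite -rhoD addrC subrK addrC subrK.
Qed.

Lemma rho_sum (T : Type) (r : seq T) (P : pred T) (F : T -> B) :
  rho (\sum_(t <- r | P t) F t) = \sum_(t <- r | P t) rho (F t).
Proof. exact: (big_morph _ rhoD rho0). Qed.

Lemma rhoZ (c : C) x : rho (c *: x) = c * rho x.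
Proof. by rewrite -[x]mul1r scalerAl rhoM rhoC mul1r. Qed.

Lemma m_sub_rho x : m (x - rho x *: 1).
Proof. by apply/rho_m; rewrite rhoB rhoC subrr. Qed.

Lemma mpow_mul_rho k c z : mpow m k c -> mpow m k.+1 (c * z - rho z *: c).
Proof.
by move=> ck; rewrite -[c in rho z *: c]mulr1 scalerAr -mulrBr; apply: mpowS_mulr ck (m_sub_rho z).
Qed.

Lemma Xsp_pi (f : I -> B) : BhatX m f -> Xsp (pi_red rho f).
Proof.
move=> /(_ 1%N) [l Hl]; exists l => i rhoi; apply: Hl => fi.
by apply/rhoi/rho_m/(mpow1 m_ideal).
Qed.

Lemma Xsp_cover (T : finType) (x : T -> I -> C) : (forall t, Xsp (x t)) ->
  exists sup : seq I, forall t i, x t i <> 0 -> List.In i sup.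
Proof.
move=> Xx; suff [sup Hsup] : exists sup : seq I,
    forall t, t \in enum T -> forall i, x t i <> 0 -> List.In i sup.
  by exists sup => t; apply: Hsup; rewrite mem_enum.
elim: (enum T) => [|t0 r [sup Hsup]]; first by exists [::].
have [l Hl] := Xx t0; exists (l ++ sup) => t.
rewrite in_cons => /orP [/eqP -> | tr] i xi; apply/List.in_or_app; first by left; apply: Hl.
by right; apply: Hsup tr i xi.
Qed.

(* Flatness of [X] over [C]: a relation in [m^k / m^(k+1)] between the
   reductions of elements of [B^X] comes from relations in [X]. *)
Lemma pi_relation k (T : finType) (c : T -> B) (z : T -> I -> B) :
  (forall t, mpow m k (c t)) -> (forall t, BhatX m (z t)) ->
  mpowX k.+1 (fun i => \sum_t c t * z t i) ->
  tensor_relations (mpow m k.+1) (mpow m k) c (fun t => pi_red rho (z t)).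
Proof.
move=> ck zB sumk; have [sup Hsup] := Xsp_cover (fun t => Xsp_pi (zB t)).
apply: (tensor_vanishing (@mpow0 _ m k.+1) (@mpowD _ m k.+1) (@mpowZ k.+1) ck Hsup) => i.
have -> : \sum_t pi_red rho (z t) i *: c t =
    \sum_t c t * z t i - \sum_t (c t * z t i - rho (z t i) *: c t).
  by rewrite -sumrB; apply: eq_bigr => t _; rewrite opprB addrC subrK.
by apply: (mpowB m_ideal) => //; apply: mpow_sum => t; apply: mpow_mul_rho.
Qed.

Variables (s : nat) (g : 'I_s -> B).
Hypothesis g_m : forall r, m (g r).
Hypothesis g_span : forall x, m x <-> exists a : 'I_s -> B, x = \sum_(r < s) a r * g r.
Hypothesis m_separated : forall x, (forall k, mpow m k x) -> x = 0.

Lemma BhatX_gens_decomp k f : BhatX m f -> mpowX k.+1 f ->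
  exists h : 'I_s -> I -> B, (forall r, BhatX m (h r)) /\ (forall r, mpowX k (h r)) /\
  forall i, f i = \sum_(r < s) g r * h r i.
Proof.
move=> fB fk.
have /choice [u Hu] i := m_gens_graded m_ideal g_m g_span m_separated
  (proj1 (mpow1 m_ideal _) (mpow_le (ltn0Sn k) (fk i))).
exists (fun r i => u i r); split; last split.
- move=> r K; have [l Hl] := fB K.+1; exists l => i uK; apply: Hl => fK.
  by apply/uK/(proj2 (Hu i)).
- by move=> r i; apply: (proj2 (Hu i)).
- by move=> i; case: (Hu i).
Qed.

Definition approximates k (N : (I -> B) -> Prop) (T : finType) (c : T -> B)
    (z : T -> I -> B) (d : I -> B) :=
  [/\ forall t, mpow m k (c t), forall t, N (z t)
    & mpowX k.+1 (fun i => d i - \sum_t c t * z t i)].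

Definition mpow_approx k N d :=
  exists q (c : 'I_q -> B) (z : 'I_q -> I -> B), approximates k N c z d.

(* [N ∩ m^k X ⊆ m^k N + m^(k+1) X] *)
Definition mpow_flat k N := forall d, N d -> mpowX k d -> mpow_approx k N d.

Lemma approximates_ord k N (T : finType) c z d :
  @approximates k N T c z d -> mpow_approx k N d.
Proof.
move=> [ck Nz dk]; exists #|{: T}|, (c \o enum_val), (z \o enum_val).
split=> [a|a|i]; [exact: ck | exact: Nz |].
by rewrite -(big_enum_val (fun t => c t * z t i)); apply: dk.
Qed.

Lemma mpow_approx_family (T : finType) (N : T -> (I -> B) -> Prop) k (d : T -> I -> B) :
  (forall t, mpow_approx k (N t) (d t)) ->
  exists (q : T -> nat) (c : forall t, 'I_(q t) -> B) (z : forall t, 'I_(q t) -> I -> B),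
    forall t, approximates k (N t) (c t) (z t) (d t).
Proof.
move=> Nd; have /choice [F HF] t : exists p : {q : nat & ('I_q -> B) * ('I_q -> I -> B)},
    approximates k (N t) (projT2 p).1 (projT2 p).2 (d t).
  by have [q [c [z H]]] := Nd t; exists (existT _ q (c, z)).
by exists (fun t => projT1 (F t)), (fun t => (projT2 (F t)).1), (fun t => (projT2 (F t)).2).
Qed.

Lemma sum_gens_approx (u : 'I_s -> I -> B) (q : 'I_s -> nat)
    (c : forall r, 'I_(q r) -> B) (z : forall r, 'I_(q r) -> I -> B) i :
  \sum_(r < s) g r * u r i =
  \sum_(r < s) g r * (u r i - \sum_(a < q r) c r a * z r a i) +
  \sum_(p : {r : 'I_s & 'I_(q r)}) g (tag p) * c (tag p) (tagged p) * z (tag p) (tagged p) i.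
Proof.
rewrite -(sum_sigT (fun r a => g r * c r a * z r a i)) -big_split /=.
apply: eq_bigr => r _; under [X in _ + X]eq_bigr => a _ do rewrite -mulrA.
by rewrite mulrBr mulr_sumr subrK.
Qed.

Section Flatness.
Variable N : (I -> B) -> Prop.
Hypothesis N_submod : is_Bsubmodule m N.

Lemma combination_raise k (T : finType) (c : T -> B) (z : T -> I -> B) :
  (forall t, mpow m k.+1 (c t)) -> (forall t, N (z t)) ->
  mpowX k.+2 (fun i => \sum_t c t * z t i) ->
  exists y : 'I_s -> I -> B, [/\ forall r, N (y r), forall r, mpowX k.+1 (y r)
    & forall i, \sum_t c t * z t i = \sum_(r < s) g r * y r i].
Proof.
move=> ck Nz sumk.
have [q [kap [w [wk [kapz cw]]]]] :=
  pi_relation ck (fun t => submod_BhatX N_submod (Nz t)) sumk.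
pose Z t' i := \sum_t kap t' t *: z t i.
(* The relations [kap] kill the reductions of the [z t], so [Z t'] lies in
   [N ∩ m X]; this is where one power of [m] is gained. *)
have mZ t' i : m (Z t' i).
  by apply/rho_m; rewrite rho_sum; apply: etrans (kapz t' i); apply: eq_bigr => t _; apply: rhoZ.
have /choice [e He] t := proj1 (mpowS_gens m_ideal g_m g_span k.+1 _) (cw t).
have /choice [om Hom] t' := proj1 (mpowS_gens m_ideal g_m g_span k _) (wk t').
exists (fun r i => \sum_t e t r * z t i + \sum_t' om t' r * Z t' i); split.
- move=> r; apply: submodD => //; apply: submod_lin => // t'.
  by apply: submod_sum => // t; apply: submodZ.
- move=> r i; apply: mpowD; apply: mpow_sum.
    by move=> t; rewrite mulrC; apply: (mpowM m_ideal); case: (He t).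
  by move=> t'; apply: mpowS_mulr (mZ t' i); case: (Hom t').
- move=> i; under [RHS]eq_bigr => r _ do rewrite mulrDr.
  rewrite big_split /= !exchange_sum_mul.
  under [X in _ = X + _]eq_bigr => t _ do rewrite -(proj2 (He t)).
  under [X in _ = _ + X]eq_bigr => t' _ do rewrite -(proj2 (Hom t')) mulr_sumr.
  rewrite [X in _ = _ + X]exchange_big -big_split /=; apply: eq_bigr => t _.
  rewrite mulrBl mulr_suml.
  have -> : \sum_t' (kap t' t *: w t') * z t i = \sum_t' w t' * (kap t' t *: z t i).
    by apply: eq_bigr => t' _; rewrite -scalerAl scalerAr.
  by rewrite subrK.
Qed.

Lemma gens_sum_raise k (u : 'I_s -> I -> B) : mpow_flat k N ->
  (forall r, N (u r)) -> (forall r, mpowX k (u r)) ->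
  mpowX k.+2 (fun i => \sum_(r < s) g r * u r i) ->
  exists u' : 'I_s -> I -> B, [/\ forall r, N (u' r), forall r, mpowX k.+1 (u' r)
    & forall i, \sum_(r < s) g r * u' r i = \sum_(r < s) g r * u r i].
Proof.
move=> flat_k Nu uk sumk.
have [q [c [z Hcz]]] := mpow_approx_family (fun r : 'I_s => flat_k _ (Nu r) (uk r)).
pose v r i := u r i - \sum_(a < q r) c r a * z r a i.
have ck r a : mpow m k (c r a) by case: (Hcz r).
have Nz r a : N (z r a) by case: (Hcz r).
have vk r : mpowX k.+1 (v r) by case: (Hcz r).
have gvk i : mpow m k.+2 (\sum_(r < s) g r * v r i).
  by apply: mpow_sum => r; apply: mpowS_mul (g_m r) (vk r i).
have [|y [Ny yk Ey]] := combination_raise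
  (c := fun p : {r : 'I_s & 'I_(q r)} => g (tag p) * c (tag p) (tagged p))
  (z := fun p => z (tag p) (tagged p))
  (fun p => mpowS_mul (g_m _) (ck _ _)) (fun p => Nz _ _) _.
  move=> i; have := mpowB m_ideal (sumk i) (gvk i).
  by rewrite (sum_gens_approx u c z i) addrC addKr.
exists (fun r i => v r i + y r i); split.
- by move=> r; apply: submodD => //; apply: submodB => //; apply: submod_lin.
- by move=> r i; apply: mpowD; [apply: vk | apply: yk].
- move=> i; rewrite (sum_gens_approx u c z i) Ey -big_split /=.
  by apply: eq_bigr => r _; rewrite mulrDr.
Qed.

Hypothesis N_quasi_flat : quasi_flat m N.

Lemma quasi_flat_gens d : N d -> mX m d -> forall K, exists u : 'I_s -> I -> B,
  (forall r, N (u r)) /\ mpowX K (fun i => d i - \sum_(r < s) g r * u r i).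
Proof.
move=> Nd md K; have [b [y [kk [Ny [bk [_ conv]]]]]] := N_quasi_flat Nd md.
have [N0 HN0] := conv K.
have bm j : m (b j) by case: (bk j) => k1 bkj; apply/(mpow1 m_ideal)/(mpow_le k1 bkj).
have /choice [al Hal] j := proj1 (g_span (b j)) (bm j).
exists (fun r i => \sum_(j < N0) al j r * y j i); split=> [r|i].
  by apply: submod_lin.
rewrite exchange_sum_mul.
have -> : \sum_(j < N0) (\sum_(r < s) g r * al j r) * y j i = \sum_(j < N0) b j * y j i.
  by apply: eq_bigr => j _; rewrite Hal; congr (_ * _); apply: eq_bigr => r _; rewrite mulrC.
exact: HN0.
Qed.

Lemma mpow_flatS k : (forall l, (l <= k)%N -> mpow_flat l N) -> mpow_flat k.+1 N.
Proof.
move=> flat d Nd dk.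
have raise l : (l <= k)%N -> exists u : 'I_s -> I -> B, [/\ forall r, N (u r),
    forall r, mpowX l (u r) & mpowX k.+2 (fun i => d i - \sum_(r < s) g r * u r i)].
  elim: l => [_|l IH lk].
    have md : mX m d.
      by split; [apply: submod_BhatX Nd | move=> i; apply/(mpow1 m_ideal)/(mpow_le _ (dk i))].
    by have [u [Nu du]] := quasi_flat_gens Nd md k.+2; exists u.
  have [u [Nu ul du]] := IH (ltnW lk).
  have [|u' [Nu' ul' Eu]] := gens_sum_raise (flat l (ltnW lk)) Nu ul.
    move=> i; rewrite -(subKr (d i) (\sum_(r < s) _)).
    apply: (mpowB m_ideal); first exact: (@mpow_le _ _ l.+2 k.+1 _ lk (dk i)).
    exact: (@mpow_le _ _ l.+2 k.+2 _ (ltnW lk) (du i)).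
  by exists u'; split=> // i; rewrite Eu.
have [u [Nu uk du]] := raise k (leqnn k).
have [q [c [z Hcz]]] := mpow_approx_family (fun r : 'I_s => flat k (leqnn k) _ (Nu r) (uk r)).
apply: (approximates_ord (c := fun p : {r : 'I_s & 'I_(q r)} => g (tag p) * c (tag p) (tagged p))
  (z := fun p => z (tag p) (tagged p))); split=> [p|p|i].
- by apply: mpowS_mul; case: (Hcz (tag p)).
- by case: (Hcz (tag p)).
- have gu : mpow m k.+2 (\sum_(r < s) g r * (u r i - \sum_(a < q r) c r a * z r a i)).
    by apply: mpow_sum => r; apply: mpowS_mul (g_m r) _; case: (Hcz r).
  by have := mpowD (du i) gu; rewrite (sum_gens_approx u c z i) opprD addrA addrAC subrK.
Qed.

Lemma quasi_flat_mpow_flat k : mpow_flat k N.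
Proof.
elim/ltn_ind: k => -[_|k IH]; last by apply: mpow_flatS => l lk; apply: IH.
move=> d Nd _; apply: (approximates_ord (c := fun _ : 'I_1 => 1) (z := fun _ => d)).
by split=> // i; rewrite big_ord1 mul1r subrr; apply: mpow0.
Qed.

End Flatness.

Lemma mY_finite N (q : nat) (b : 'I_q -> B) (y : 'I_q -> I -> B) :
  is_Bsubmodule m N -> (forall r, m (b r)) -> (forall r, N (y r)) ->
  mY m N (fun i => \sum_(r < q) b r * y r i).
Proof.
move=> N_submod bm Ny.
pose b' n := oapp b 0 (insub n); pose y' n := oapp y (fun _ => 0) (insub n).
exists b', y', (fun n => if (n < q)%N then 1%N else n.+1).
split=> [n|]; first by rewrite /y'; case: insub => [r|] /=; [apply: Ny | apply: submod0].
split=> [n|].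
  by rewrite /b'; case: insubP => [r -> _|/negbTE ->]; split=> //; [apply/mpow1/bm | apply: mpow0].
split=> [K|K].
  by exists (maxn q K) => r; rewrite geq_max => /andP [qr Kr]; rewrite ltnNge qr ltnW.
exists q => N' qN' i.
have -> : \sum_(n < N') b' n * y' n i = \sum_(r < q) b r * y r i.
  rewrite -(subnKC qN') big_split_ord /= [X in _ + X]big1 ?addr0 => [|n _].
  - by apply: eq_bigr => r _; rewrite /b' /y' valK.
  - by rewrite /b' insubN ?mul0r // ltnNge leq_addr.
by rewrite subrr; apply: mpow0.
Qed.

Variables (n : nat) (M : 'I_n -> (I -> B) -> Prop).
Hypothesis M_submod : forall j, is_Bsubmodule m (M j).

Section Forward.
Hypothesis M_direct : is_direct_sum (BhatX m) M.

Lemma direct_sum_decomp f : BhatX m f -> exists w : 'I_n -> I -> B,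
  (forall j, M j (w j)) /\ forall i, f i = \sum_(j < n) w j i.
Proof. by move=> fB; case: M_direct => _ [/(_ f fB) [w [Mw ->]] _]; exists w. Qed.

Lemma direct_sum_uniq (w w' : 'I_n -> I -> B) :
  (forall j, M j (w j)) -> (forall j, M j (w' j)) ->
  (forall i, \sum_(j < n) w j i = \sum_(j < n) w' j i) -> w = w'.
Proof.
move=> Mw Mw' ww'; case: M_direct => _ [_ uniq]; apply/funext/uniq; last exact/funext.
by move=> j; split.
Qed.

Lemma direct_sum_mpowX k f (w : 'I_n -> I -> B) : BhatX m f -> mpowX k f ->
  (forall j, M j (w j)) -> (forall i, f i = \sum_(j < n) w j i) -> forall j, mpowX k (w j).
Proof.
elim: k f w => [//|k IH] f w fB fk Mw fw j i.
have [h [hB [hk fh]]] := BhatX_gens_decomp fB fk.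
have /choice [W HW] r := direct_sum_decomp (hB r).
have MW r j' : M j' (W r j') by case: (HW r).
have -> : w = fun j i => \sum_(r < s) g r * W r j i.
  apply: direct_sum_uniq => // [j'|i']; first by apply: (submod_lin (M_submod j')) => r.
  rewrite -fw fh exchange_big; apply: eq_bigr => r _ /=.
  by case: (HW r) => _ ->; rewrite mulr_sumr.
apply/(mpowS_gens m_ideal g_m g_span); exists (fun r => W r j i); split=> // r.
by case: (HW r) => MWr hW; apply: (IH (h r)).
Qed.

Lemma summand_closed j f :
  (forall k, exists p, M j p /\ mpowX k (fun i => f i - p i)) -> M j f.
Proof.
move=> fapprox.
have fB : BhatX m f.
  apply: BhatX_approx => k; have [p [Mp fp]] := fapprox k.
  by exists p; split=> //; apply: (submod_BhatX (M_submod j)).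
have [w [Mw fw]] := direct_sum_decomp fB.
suff w0 l : l != j -> w l = (fun _ => 0).
  have -> : f = w j by apply/funext => i; rewrite fw (bigD1 j) //= big1 ?addr0 // => l /w0 ->.
  exact: Mw.
move=> lj; apply/funext => i; apply: m_separated => k.
have [p [Mp fp]] := fapprox k.
pose w' j' := if j' == j then (fun i => w j i - p i) else w j'.
have := direct_sum_mpowX (w := w') _ fp _ _ l i; rewrite /w' (negbTE lj); apply.
- by apply: (submodB BhatX_submod) => //; apply: (submod_BhatX (M_submod j)).
- by move=> j'; case: eqP => [->|_] //; apply: submodB (M_submod j) _ _ (Mw j) Mp.
- move=> i'; rewrite fw (bigD1 j) //= [RHS](bigD1 j) //= eqxx addrAC; congr (_ + _).
  by apply: eq_bigr => l' /negbTE ->.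
Qed.

Lemma summand_pseudoclosed j : pseudoclosed m (M j).
Proof.
move=> f [b [y [kk [My [_ [_ conv]]]]]]; apply: summand_closed => k.
have [N HN] := conv k; exists (fun i => \sum_(l < N) b l * y l i).
by split; [apply: (submod_lin (M_submod j)) | apply: HN].
Qed.

Lemma summand_quasi_flat j : quasi_flat m (M j).
Proof.
move=> f Mf [fB fm].
have [h [hB [_ fh]]] := BhatX_gens_decomp (k := 0) fB (fun i => proj2 (mpow1 m_ideal _) (fm i)).
have /choice [W HW] r := direct_sum_decomp (hB r).
have MW r j' : M j' (W r j') by case: (HW r).
pose e j' : I -> B := if j' == j then f else fun _ => 0.
have /(congr1 (fun w => w j)) : e = fun j' i => \sum_(r < s) g r * W r j' i.
  apply: direct_sum_uniq => [j'|j'|i]; last 1 first.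
  - rewrite (bigD1 j) //= /e eqxx big1 ?addr0 => [|j' /negbTE -> //].
    rewrite fh exchange_big; apply: eq_bigr => r _ /=.
    by case: (HW r) => _ ->; rewrite mulr_sumr.
  - by rewrite /e; case: eqP => [->|_] //; apply: submod0 (M_submod j').
  - by apply: (submod_lin (M_submod j')) => r.
by rewrite /e eqxx => ->; apply: (@mY_finite (M j) s g (fun r => W r j)).
Qed.

Lemma direct_sum_pi : is_direct_sum (@Xsp R I) (fun j => image_pi rho (M j)).
Proof.
split; [|split].
- by move=> j x [f [Mf ->]]; apply/Xsp_pi/(submod_BhatX (M_submod j)).
- move=> x [l Hl].
  have xB : BhatX m (fun i => x i *: (1 : B)).
    move=> k; exists l => i xk; apply: Hl => x0; apply: xk; rewrite x0 scale0r; exact: mpow0.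
  have [w [Mw xw]] := direct_sum_decomp xB.
  exists (fun j => pi_red rho (w j)); split=> [j|]; first by exists (w j).
  by apply/funext => i; rewrite /pi_red -rho_sum -xw rhoC.
- move=> xa xb xab sum_ab j.
  have /choice [FA HA] j' := proj1 (xab j').
  have /choice [FB HB] j' := proj2 (xab j').
  pose d j' i := FA j' i - FB j' i.
  have Md j' : M j' (d j') by apply: (submodB (M_submod j')); [case: (HA j') | case: (HB j')].
  have rho_d j' i : rho (d j' i) = xa j' i - xb j' i.
    by rewrite rhoB; case: (HA j') => _ ->; case: (HB j') => _ ->.
  have dB : BhatX m (fun i => \sum_(j' < n) d j' i).
    by apply: (submod_sum BhatX_submod) => j'; apply: (submod_BhatX (M_submod j')).
  have d1 : mpowX 1 (fun i => \sum_(j' < n) d j' i).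
    move=> i; apply/(mpow1 m_ideal)/rho_m; rewrite rho_sum.
    under eq_bigr => j' _ do rewrite rho_d.
    by rewrite sumrB -!(congr1 (fun x => x i) sum_ab) subrr.
  apply/funext => i; apply/eqP; rewrite -subr_eq0 -rho_d; apply/eqP/rho_m/(mpow1 m_ideal).
  exact: (direct_sum_mpowX dB d1 Md (fun i => erefl)).
Qed.

End Forward.

Section Backward.
Hypothesis M_quasi_flat : forall j, quasi_flat m (M j).
Hypothesis M_pi_direct : is_direct_sum (@Xsp R I) (fun j => image_pi rho (M j)).

Lemma pi_direct_sum_eq0 (x : 'I_n -> I -> C) : (forall j, image_pi rho (M j) (x j)) ->
  (forall i, \sum_(j < n) x j i = 0) -> forall j, x j = (fun _ => 0).
Proof.
move=> Mx x0 j; case: M_pi_direct => _ [_ uniq].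
apply: (uniq x (fun _ _ => 0)) => [j'|]; last first.
  by apply/funext => i; rewrite x0 big1.
split=> //; exists (fun _ => 0); split; first exact: submod0 (M_submod j').
by apply/funext => i; rewrite /pi_red rho0.
Qed.

Lemma pi_direct_relation (q : 'I_n -> nat) (z : forall j, 'I_(q j) -> I -> B)
    (kap : {j : 'I_n & 'I_(q j)} -> C) : (forall j a, M j (z j a)) ->
  (forall i, \sum_p kap p * rho (z (tag p) (tagged p) i) = 0) ->
  forall j i, \sum_(a < q j) kap (Tagged (fun j => 'I_(q j)) a) * rho (z j a i) = 0.
Proof.
move=> Mz kapz j i.
pose x j i := \sum_(a < q j) kap (Tagged (fun j => 'I_(q j)) a) * rho (z j a i).
suff /(congr1 (fun f => f i)) : x j = fun _ => 0 by [].
apply: pi_direct_sum_eq0 => [j'|i'].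
  exists (fun i => \sum_(a < q j') kap (Tagged (fun j => 'I_(q j)) a) *: z j' a i); split.
    by apply: (submod_sum (M_submod j')) => a; apply: submodZ.
  by apply/funext => i'; rewrite /pi_red rho_sum; apply: eq_bigr => a _; rewrite rhoZ.
rewrite /x (sum_sigT (fun j a => kap (Tagged (fun j => 'I_(q j)) a) * rho (z j a i'))).
by apply: etrans (kapz i'); apply: eq_bigr => -[j' a].
Qed.

Lemma pi_direct_sum_mpowXS k (d : 'I_n -> I -> B) : (forall j, M j (d j)) ->
  (forall i, \sum_(j < n) d j i = 0) -> (forall j, mpowX k (d j)) ->
  forall j, mpowX k.+1 (d j).
Proof.
move=> Md d0 dk.
have [q [c [z Hcz]]] := mpow_approx_family
  (fun j => quasi_flat_mpow_flat (M_submod j) (@M_quasi_flat j) (Md j) (dk j)).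
have ck j a : mpow m k (c j a) by case: (Hcz j).
have Mz j a : M j (z j a) by case: (Hcz j).
pose T := {j : 'I_n & 'I_(q j)}.
have [|q' [kap [w [wk [kapz cw]]]]] := pi_relation (T := T)
  (c := fun p => c (tag p) (tagged p)) (z := fun p => z (tag p) (tagged p))
  (fun p => ck _ _) (fun p => submod_BhatX (M_submod _) (Mz _ _)).
  move=> i; rewrite -(sum_sigT (fun j a => c j a * z j a i)).
  have -> : \sum_(j < n) \sum_(a < q j) c j a * z j a i =
      \sum_(j < n) d j i - \sum_(j < n) (d j i - \sum_(a < q j) c j a * z j a i).
    by rewrite -sumrB; apply: eq_bigr => j _; rewrite subKr.
  rewrite d0; apply: (mpowB m_ideal); first exact: mpow0.
  by apply: mpow_sum => j; case: (Hcz j).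
move=> j i.
have Y0 : \sum_(a < q j) rho (z j a i) *:
    \sum_(t < q') kap t (Tagged (fun j => 'I_(q j)) a) *: w t = 0.
  under eq_bigr => a _ do rewrite scaler_sumr.
  rewrite exchange_big big1 // => t _ /=.
  under eq_bigr => a _ do rewrite scalerA mulrC.
  by rewrite -scaler_suml (pi_direct_relation (kap := kap t) Mz (kapz t)) scale0r.
have -> : d j i = (d j i - \sum_(a < q j) c j a * z j a i) +
    \sum_(a < q j) (c j a * z j a i - rho (z j a i) *: c j a) +
    \sum_(a < q j) rho (z j a i) *:
      (c j a - \sum_(t < q') kap t (Tagged (fun j => 'I_(q j)) a) *: w t).
  under [X in _ + X]eq_bigr => a _ do rewrite scalerBr.
  by rewrite !sumrB Y0 subr0 addrA !subrK.
apply: mpowD; first apply: mpowD.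
- by case: (Hcz j).
- by apply: mpow_sum => a; apply: mpow_mul_rho.
- by apply: mpow_sum => a; apply: mpowZ; exact: (cw (Tagged (fun j => 'I_(q j)) a)).
Qed.

Lemma pi_direct_sum_uniq (d : 'I_n -> I -> B) : (forall j, M j (d j)) ->
  (forall i, \sum_(j < n) d j i = 0) -> d = fun _ _ => 0.
Proof.
move=> Md d0; apply/funext => j; apply/funext => i; apply: m_separated => k.
by elim: k j i => [//|k IH]; apply: pi_direct_sum_mpowXS.
Qed.

Lemma pi_direct_sum_step h : BhatX m h -> exists (w : 'I_n -> I -> B) (h' : 'I_s -> I -> B),
  [/\ forall j, M j (w j), forall r, BhatX m (h' r)
    & forall i, h i = \sum_(j < n) w j i + \sum_(r < s) g r * h' r i].
Proof.
move=> hB; have [x [Mx hx]] : exists x : 'I_n -> I -> C,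
    (forall j, image_pi rho (M j) (x j)) /\ pi_red rho h = (fun i => \sum_(j < n) x j i).
  by case: M_pi_direct => _ [/(_ _ (Xsp_pi hB))].
have /choice [w Hw] j := Mx j.
have Mw j : M j (w j) by case: (Hw j).
pose e i := h i - \sum_(j < n) w j i.
have eB : BhatX m e.
  apply: (submodB BhatX_submod) => //; apply: (submod_sum BhatX_submod) => j.
  by apply: (submod_BhatX (M_submod j)).
have e1 : mpowX 1 e.
  move=> i; apply/(mpow1 m_ideal)/rho_m; rewrite /e rhoB rho_sum.
  have -> : rho (h i) = \sum_(j < n) x j i by apply: (congr1 (fun x => x i) hx).
  by apply/eqP; rewrite subr_eq0; apply/eqP/eq_bigr => j _; case: (Hw j) => _ ->.
have [h' [h'B [_ eh']]] := BhatX_gens_decomp (k := 0) eB e1.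
by exists w, h'; split=> // i; rewrite -eh' /e addrC subrK.
Qed.

Hypothesis s_gt0 : (0 < s)%N.
Hypothesis m_complete : forall u : nat -> B, (forall k, mpow m k (u k.+1 - u k)) ->
  exists x, forall k, mpow m k (x - u k).
Hypothesis M_pseudoclosed : forall j, pseudoclosed m (M j).

Section Tree.
Variable D : (I -> B) -> ('I_n -> I -> B) * ('I_s -> I -> B).
Hypothesis D_spec : forall h, BhatX m h ->
  [/\ forall j, M j ((D h).1 j), forall r, BhatX m ((D h).2 r)
    & forall i, h i = \sum_(j < n) (D h).1 j i + \sum_(r < s) g r * (D h).2 r i].
Variable f : I -> B.
Hypothesis fB : BhatX m f.

(* The nodes of the [s]-ary tree of iterated decompositions of [f], numbered
   breadth first: the children of node [c] are [c * s + r + 1] for [r < s].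
   Node [c] carries a coefficient (the product of the generators along the
   path from the root), a remainder in [B^X] and its depth. *)
Fixpoint node_fuel (F c : nat) : B * (I -> B) * nat :=
  match F, c with
  | F'.+1, c'.+1 =>
      let t := node_fuel F' (c' %/ s) in let r := Ordinal (ltn_pmod c' s_gt0) in
      (t.1.1 * g r, (D t.1.2).2 r, t.2.+1)
  | _, _ => (1, f, 0%N)
  end.

Lemma node_fuel_stable F F' c : (c <= F)%N -> (c <= F')%N -> node_fuel F c = node_fuel F' c.
Proof.
elim: F F' c => [|F IH] [|F'] [|c] //= cF cF'.
by rewrite (IH F') // (leq_trans (leq_div _ _)).
Qed.

Definition node c := node_fuel c c.
Definition node_coef c := (node c).1.1.
Definition node_rem c := (node c).1.2.
Definition node_depth c := (node c).2.

Lemma nodeS c : node c.+1 =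
  (node_coef (c %/ s) * g (Ordinal (ltn_pmod c s_gt0)),
   (D (node_rem (c %/ s))).2 (Ordinal (ltn_pmod c s_gt0)), (node_depth (c %/ s)).+1).
Proof. by rewrite /node /= (@node_fuel_stable c (c %/ s)) // leq_div. Qed.

Lemma node_remB c : BhatX m (node_rem c).
Proof.
elim/ltn_ind: c => -[|c] IH; first exact: fB.
have pB : BhatX m (node_rem (c %/ s)) by apply: IH; rewrite ltnS leq_div.
by rewrite /node_rem nodeS /=; case: (D_spec pB) => _ rB _; exact: rB.
Qed.

Lemma node_coef_depth c : mpow m (node_depth c) (node_coef c).
Proof.
elim/ltn_ind: c => -[//|c] IH.
rewrite /node_coef /node_depth nodeS /=; apply: mpowS_mulr (g_m _).
by apply: IH; rewrite ltnS leq_div.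
Qed.

Fixpoint level_start K := if K is K'.+1 then (level_start K' * s + 1)%N else 0%N.

Lemma level_start_depth K c : (level_start K <= c)%N -> (K <= node_depth c)%N.
Proof.
elim: K c => [//|K IH] [|c]; rewrite /= addn1 // ltnS => le.
by rewrite /node_depth nodeS /= ltnS; apply: IH; rewrite leq_divRL.
Qed.

Lemma level_start_coef K c : (level_start K <= c)%N -> mpow m K (node_coef c).
Proof. by move=> le; apply: mpow_le (level_start_depth le) (node_coef_depth c). Qed.

Lemma level_startS K : (level_start K <= level_start K.+1)%N.
Proof. by rewrite /= addn1 leqW // leq_pmulr. Qed.

Definition node_part c := (D (node_rem c)).1.

Lemma node_partM c j : M j (node_part c j).
Proof. by case: (D_spec (node_remB c)). Qed.

Lemma node_split c i : node_coef c * node_rem c i =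
  node_coef c * \sum_(j < n) node_part c j i +
  \sum_(r < s) node_coef (c * s + r).+1 * node_rem (c * s + r).+1 i.
Proof.
case: (D_spec (node_remB c)) => _ _ ->; rewrite mulrDr; congr (_ + _).
rewrite mulr_sumr; apply: eq_bigr => r _; rewrite /node_coef /node_rem nodeS /=.
have -> : Ordinal (ltn_pmod (c * s + r) s_gt0) = r.
  by apply: val_inj; rewrite /= modnMDl modn_small.
by rewrite divnMDl // divn_small // addn0 mulrA.
Qed.

Lemma telescope N i : f i =
  \sum_(0 <= c < N) node_coef c * \sum_(j < n) node_part c j i +
  \sum_(N <= c < N * s + 1) node_coef c * node_rem c i.
Proof.
elim: N => [|N IH]; first by rewrite big_geq // mul0n add0n big_nat1 add0r mul1r.
rewrite IH big_nat_recr //= -addrA; congr (_ + _).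
have le1 : (N.+1 <= N * s + 1)%N by rewrite addn1 ltnS leq_pmulr.
rewrite big_ltn // node_split -!addrA; congr (_ + _).
have le2 : (N * s + 1 <= N.+1 * s + 1)%N by rewrite leq_add2r leq_mul2r leqnSn orbT.
rewrite addrC (big_cat_nat le1 le2) /=; congr (_ + _).
rewrite -{1}(add0n (N * s + 1)%N) big_addn mulSnr.
have -> : (N * s + s + 1 - (N * s + 1) = s)%N by rewrite addnAC addKn.
rewrite big_mkord; apply: eq_bigr => r _.
by have -> : (r + (N * s + 1) = (N * s + r).+1)%N by rewrite addn1 addnS addnC.
Qed.

Lemma mpow_sum_nat k a b (F : nat -> B) :
  (forall c, (a <= c < b)%N -> mpow m k (F c)) -> mpow m k (\sum_(a <= c < b) F c).
Proof.
move=> Fk; rewrite big_nat_cond; apply: big_ind; [exact: mpow0 | exact: mpowD |].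
by move=> c /andP [/Fk ck _].
Qed.

Lemma telescope_rem K N i : (level_start K <= N)%N ->
  mpow m K (\sum_(N <= c < N * s + 1) node_coef c * node_rem c i).
Proof.
move=> KN; apply: mpow_sum_nat => c /andP [Nc _]; rewrite mulrC.
by apply: (mpowM m_ideal); apply: level_start_coef (leq_trans KN Nc).
Qed.

Definition partial_sum j N i := \sum_(0 <= c < N) node_coef c * node_part c j i.

Lemma partial_sum_cauchy j K N i : (level_start K <= N)%N ->
  mpow m K (partial_sum j N i - partial_sum j (level_start K) i).
Proof.
move=> KN; rewrite /partial_sum (big_cat_nat (leq0n _) KN) /= addrAC subrr add0r.
apply: mpow_sum_nat => c /andP [Kc _]; rewrite mulrC; apply: (mpowM m_ideal).
exact: level_start_coef.
Qed.

Lemma partial_sum_limit j : exists v : I -> B, M j v /\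
  forall K i, mpow m K (v i - partial_sum j (level_start K) i).
Proof.
have /choice [v Hv] i : exists x, forall K, mpow m K (x - partial_sum j (level_start K) i).
  by apply: m_complete => K; apply/partial_sum_cauchy/level_startS.
exists v; split=> //; apply: M_pseudoclosed.
exists node_coef, (fun c => node_part c j), node_depth; split; first by move=> c; apply: node_partM.
split; first by move=> c; split; [exact: leq0n | exact: node_coef_depth].
split; first by move=> K; exists (level_start K) => c; apply: level_start_depth.
move=> K; exists (level_start K) => N KN i.
have := mpowB m_ideal (Hv i K) (partial_sum_cauchy j i KN).
by rewrite opprB addrA subrK /partial_sum big_mkord.
Qed.

Lemma tree_decomp : exists w : 'I_n -> I -> B,
  (forall j, M j (w j)) /\ forall i, f i = \sum_(j < n) w j i.
Proof.
have /choice [v Hv] j := partial_sum_limit j.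
exists v; split=> [j|i]; first by case: (Hv j).
apply/eqP; rewrite -subr_eq0; apply/eqP/m_separated => K.
have -> : f i - \sum_(j < n) v j i =
    \sum_(level_start K <= c < level_start K * s + 1) node_coef c * node_rem c i -
    \sum_(j < n) (v j i - partial_sum j (level_start K) i).
  rewrite (telescope (level_start K) i) sumrB /partial_sum.
  have -> : \sum_(0 <= c < level_start K) node_coef c * \sum_(j < n) node_part c j i =
      \sum_(j < n) \sum_(0 <= c < level_start K) node_coef c * node_part c j i.
    by rewrite exchange_big /=; apply: eq_bigr => c _; rewrite mulr_sumr.
  by rewrite opprB addrAC addrC.
apply: (mpowB m_ideal); first exact: telescope_rem.
by apply: mpow_sum => j; case: (Hv j).
Qed.

End Tree.

Lemma pi_direct_sum_lift : is_direct_sum (BhatX m) M.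
Proof.
split; [|split].
- by move=> j f; apply: (submod_BhatX (M_submod j)).
- move=> f fB.
  have /choice [D HD] h : exists p : ('I_n -> I -> B) * ('I_s -> I -> B), BhatX m h ->
      [/\ forall j, M j (p.1 j), forall r, BhatX m (p.2 r)
        & forall i, h i = \sum_(j < n) p.1 j i + \sum_(r < s) g r * p.2 r i].
    have [hB|] := pselect (BhatX m h); last by exists (fun _ _ => 0, fun _ _ => 0).
    by have [w [h' Hwh]] := pi_direct_sum_step hB; exists (w, h').
  have [w [Mw fw]] := tree_decomp HD fB.
  by exists w; split=> //; apply/funext.
- move=> w w' Mww ww' j.
  have d0 : (fun j i => w j i - w' j i) = fun _ _ => 0.
    apply: pi_direct_sum_uniq => [j'|i].
      by case: (Mww j') => Mw Mw'; apply: (submodB (M_submod j')).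
    by rewrite sumrB (congr1 (fun F => F i) ww') subrr.
  by apply/funext => i; apply/subr0_eq; apply: (congr1 (fun F => F j i) d0).
Qed.

End Backward.
End Deformation.

Theorem proposition2p29 (R : realType) (B : comAlgType (R[i]))
  (m : B -> Prop) (rho : B -> R[i]) (I : Type) (n : nat)
  (M : 'I_n -> (I -> B) -> Prop) :
  deformation_base m rho ->
  (forall j, is_Bsubmodule m (M j)) ->
  (is_direct_sum (BhatX m) M <->
   ((forall j, pseudoclosed m (M j) /\ quasi_flat m (M j)) /\
    is_direct_sum (@Xsp R I) (fun j => image_pi rho (M j)))).
Proof.
move=> [[m_ideal _] [_ [noeth [[m_sep m_complete] [rhoD [rhoM [rhoC rho_m]]]]]]] M_submod.
have [s [g [s_gt0 [g_m g_span]]]] := noetherian_gens m_ideal noeth.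
split=> [M_direct | [M_pq M_pi_direct]].
  split; last exact (direct_sum_pi m_ideal rhoD rhoC rho_m g_m g_span m_sep M_submod M_direct).
  move=> j; split.
    exact (summand_pseudoclosed m_ideal g_m g_span m_sep M_submod M_direct (j := j)).
  exact (summand_quasi_flat m_ideal g_m g_span m_sep M_submod M_direct (j := j)).
exact (pi_direct_sum_lift m_ideal rhoD rhoM rhoC rho_m g_m g_span m_sep M_submod
  (fun j => proj2 (M_pq j)) M_pi_direct s_gt0 m_complete (fun j => proj1 (M_pq j))).
Qed.
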